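(* Let $n\ge1$, $\boldsymbol\mu\in\mathcal S_n^\uparrow$, $\boldsymbol\xi\in\mathbb R^n$, $\mathbf y=\boldsymbol\mu+\boldsymbol\xi$ and $\hat{\boldsymbol\mu}=\Pi_{\mathcal S_n^\uparrow}(\mathbf y)$. Let $(\hat T_1,\dots,\hat T_{\hat k})$, $\hat k=k(\hat{\boldsymbol\mu})$, be the partition of $\{1,\dots,n\}$ into the maximal sets of consecutive indices on which $\hat{\boldsymbol\mu}$ is constant. Then $$\|\hat{\boldsymbol\mu}-\boldsymbol\mu\|_2^2\le\sum_{j=1}^{\hat k}\big\|\Pi_{\mathcal S^\downarrow_{|\hat T_j|}}(\boldsymbol\xi_{\hat T_j})\big\|_2^2 .$$
   Context: $\mathcal S_m^\uparrow=\{\mathbf u\in\mathbb R^m:u_1\le\dots\le u_m\}$, $\mathcal S_m^\downarrow=-\mathcal S_m^\uparrow$ (nonincreasing sequences), with $\mathcal S_1^\uparrow=\mathbb R$. $\Pi_K$ is the Euclidean projection onto $K$. For $T=\{t_1<\dots<t_{|T|}\}$, $\boldsymbol\xi_T=(\xi_{t_1},\dots,\xi_{t_{|T|}})^T$. $k(\mathbf u)$ is the number of distinct coordinates of $\mathbf u$. *)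

(* vectors of R^m are sequences of length m over a real field. *)
From HB Require Import structures.
From mathcomp Require Import all_boot all_order all_algebra.
From Stdlib Require Import ClassicalEpsilon.
Set Implicit Arguments. Unset Strict Implicit. Unset Printing Implicit Defensive.
Import Order.TTheory GRing.Theory Num.Theory.
Local Open Scope ring_scope.

Section Defs.
Variable R : realFieldType.

Definition vadd (u v : seq R) : seq R := [seq a.1 + a.2 | a <- zip u v].
Definition vsub (u v : seq R) : seq R := [seq a.1 - a.2 | a <- zip u v].

Definition sqnorm (u : seq R) : R := \sum_(x <- u) x ^+ 2.

Definition Sup (m : nat) (u : seq R) : Prop := size u = m /\ sorted <=%R u.
Definition Sdown (m : nat) (u : seq R) : Prop := size u = m /\ sorted >=%R u.

Definition isProj (K : seq R -> Prop) (y p : seq R) : Prop :=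
  K p /\ forall v, K v -> sqnorm (vsub y p) <= sqnorm (vsub y v).

(* Pi_K(y) (the projection onto the closed convex cones used here exists and is unique) *)
Definition proj (K : seq R -> Prop) (y : seq R) : seq R :=
  epsilon (inhabits y) (isProj K y).

Fixpoint runs_aux (x : R) (c : nat) (s : seq R) : seq nat :=
  match s with
  | [::] => [:: c]
  | y :: t => if y == x then runs_aux x c.+1 t else c :: runs_aux y 1 t
  end.
Definition runs (s : seq R) : seq nat :=
  match s with [::] => [::] | x :: t => runs_aux x 1 t end.

End Defs.

(* The projection of y onto S^up is computed by the minimum-lower-set
   algorithm: the first block is the longest prefix of y of minimal mean, it is
   fitted by that mean, and the rest of y is fitted recursively.  Block values
   strictly increase, so the blocks are exactly the runs of muhat.  A
   nondecreasing q is the projection of y as soon as y - q lies in the polar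
   cone of S^up (zero sum, nonpositive suffix sums, by Abel summation) and is
   orthogonal to q.  On a block T of value c the residual is again in the polar
   cone, so d := c - mu_T, which is nonincreasing, satisfies
   |d|^2 <= <xi_T, d> <= 2 <xi_T, d> - |d|^2 <= |Pi_{S^down}(xi_T)|^2,
   the last step being the variational characterisation of the projection
   onto a cone. *)

From HB Require Import structures.
From mathcomp Require Import all_boot all_order all_algebra.
From mathcomp Require Import ring lra zify.
From Stdlib Require Import ClassicalEpsilon.
Set Implicit Arguments. Unset Strict Implicit. Unset Printing Implicit Defensive.
Import Order.TTheory GRing.Theory Num.Theory.
Local Open Scope ring_scope.

Lemma take_zip (S T : Type) k (s : seq S) (t : seq T) :
  take k (zip s t) = zip (take k s) (take k t).
Proof. by elim: s t k => [|x s IHs] [|y t] [|k] //=; rewrite IHs. Qed.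

Lemma drop_zip (S T : Type) k (s : seq S) (t : seq T) :
  drop k (zip s t) = zip (drop k s) (drop k t).
Proof. by elim: s t k => [|x s IHs] [|y t] [|k] //=; rewrite ?IHs //; case: (drop k _). Qed.

Section Vectors.
Variable R : realFieldType.
Implicit Types (c : R) (r u v w : seq R).

Definition dot u v : R := \sum_(a <- zip u v) a.1 * a.2.
Definition vsum u : R := \sum_(x <- u) x.
Definition vopp u : seq R := map -%R u.

Lemma dot_nill v : dot [::] v = 0.
Proof. by case: v => [|y v]; rewrite /dot /= big_nil. Qed.

Lemma dot_nilr u : dot u [::] = 0.
Proof. by case: u => [|x u]; rewrite /dot /= big_nil. Qed.

Lemma dot_cons x y u v : dot (x :: u) (y :: v) = x * y + dot u v.
Proof. by rewrite /dot /= big_cons. Qed.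

Lemma vsum_cons x u : vsum (x :: u) = x + vsum u.
Proof. by rewrite /vsum big_cons. Qed.

Lemma sqnorm_cons x u : sqnorm (x :: u) = x ^+ 2 + sqnorm u.
Proof. by rewrite /sqnorm big_cons. Qed.

Lemma sqnorm_dot u : sqnorm u = dot u u.
Proof.
by elim: u => [|x u IHu]; rewrite ?dot_nill ?sqnorm_cons ?dot_cons ?IHu ?expr2 // /sqnorm big_nil.
Qed.

Lemma dotC u v : dot u v = dot v u.
Proof.
by elim: u v => [|x u IHu] [|y v]; rewrite ?dot_nill ?dot_nilr // !dot_cons IHu mulrC.
Qed.

Lemma sqnorm_ge0 u : 0 <= sqnorm u.
Proof. by rewrite /sqnorm sumr_ge0 // => x _; rewrite sqr_ge0. Qed.

Lemma size_vsub u v : size (vsub u v) = minn (size u) (size v).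
Proof. by rewrite size_map size_zip. Qed.

Lemma size_vadd u v : size (vadd u v) = minn (size u) (size v).
Proof. by rewrite size_map size_zip. Qed.

Lemma size_vopp u : size (vopp u) = size u.
Proof. exact: size_map. Qed.

Lemma vsub_cons x y u v : vsub (x :: u) (y :: v) = (x - y) :: vsub u v.
Proof. by []. Qed.

Lemma vadd_cons x y u v : vadd (x :: u) (y :: v) = (x + y) :: vadd u v.
Proof. by []. Qed.

Lemma sqnorm_vsub_le0 u v : size u = size v -> sqnorm (vsub u v) <= 0 -> u = v.
Proof.
elim: u v => [|x u IHu] [|y v] //= [eq_uv].
rewrite vsub_cons sqnorm_cons => le0.
have ge0 := sqnorm_ge0 (vsub u v); have ge0' := sqr_ge0 (x - y).
have /eqP : (x - y) ^+ 2 = 0 by lra.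
by rewrite sqrf_eq0 subr_eq0 => /eqP ->; rewrite (IHu v) //; lra.
Qed.

Lemma dot_vsubl u v w : size u = size v -> dot (vsub u v) w = dot u w - dot v w.
Proof.
elim: u v w => [|x u IHu] [|y v] [|z w] // eq_uv; rewrite ?dot_nill ?dot_nilr ?subr0 //.
by rewrite vsub_cons !dot_cons IHu; [ring | case: eq_uv].
Qed.

Lemma dot_vaddl u v w : size u = size v -> dot (vadd u v) w = dot u w + dot v w.
Proof.
elim: u v w => [|x u IHu] [|y v] [|z w] // eq_uv; rewrite ?dot_nill ?dot_nilr ?addr0 //.
by rewrite vadd_cons !dot_cons IHu; [ring | case: eq_uv].
Qed.

Lemma dot_vsubr u v w : size v = size w -> dot u (vsub v w) = dot u v - dot u w.
Proof. by move=> eq_vw; rewrite dotC dot_vsubl // !(dotC u). Qed.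

Lemma sqnorm_vsub u v : size u = size v ->
  sqnorm (vsub u v) = dot u u - 2 * dot u v + dot v v.
Proof.
move=> eq_uv; rewrite sqnorm_dot dot_vsubl // !dot_vsubr ?size_vsub ?eq_uv ?minnn //.
by rewrite (dotC v u); ring.
Qed.

Lemma dot_voppl u v : dot (vopp u) v = - dot u v.
Proof.
by elim: u v => [|x u IHu] [|y v]; rewrite /= ?dot_nill ?dot_nilr ?oppr0 // !dot_cons IHu; ring.
Qed.

Lemma dot_voppr u v : dot u (vopp v) = - dot u v.
Proof. by rewrite dotC dot_voppl dotC. Qed.

Lemma sqnorm_vopp u : sqnorm (vopp u) = sqnorm u.
Proof. by rewrite !sqnorm_dot dot_voppl dot_voppr opprK. Qed.

Lemma vsub_vopp u v : vsub (vopp u) (vopp v) = vopp (vsub u v).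
Proof. by elim: u v => [|x u IHu] [|y v] //=; rewrite !vsub_cons /= IHu opprD. Qed.

Lemma voppK : involutive vopp.
Proof. by move=> u; rewrite /vopp -map_comp map_id_in // => x _ /=; rewrite opprK. Qed.

Lemma vsum_cat u v : vsum (u ++ v) = vsum u + vsum v.
Proof. exact: big_cat. Qed.

Lemma sqnorm_cat u v : sqnorm (u ++ v) = sqnorm u + sqnorm v.
Proof. exact: big_cat. Qed.

Lemma vsub_cat u1 u2 v1 v2 : size u1 = size v1 ->
  vsub (u1 ++ u2) (v1 ++ v2) = vsub u1 v1 ++ vsub u2 v2.
Proof. by move=> eq1; rewrite /vsub zip_cat // map_cat. Qed.

Lemma dot_cat u1 u2 v1 v2 : size u1 = size v1 ->
  dot (u1 ++ u2) (v1 ++ v2) = dot u1 v1 + dot u2 v2.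
Proof. by move=> eq1; rewrite /dot zip_cat // big_cat. Qed.

Lemma take_vadd k u v : take k (vadd u v) = vadd (take k u) (take k v).
Proof. by rewrite /vadd -map_take take_zip. Qed.

Lemma drop_vadd k u v : drop k (vadd u v) = vadd (drop k u) (drop k v).
Proof. by rewrite /vadd -map_drop drop_zip. Qed.

Lemma take_vsub k u v : take k (vsub u v) = vsub (take k u) (take k v).
Proof. by rewrite /vsub -map_take take_zip. Qed.

Lemma vsum_vsub u v : size u = size v -> vsum (vsub u v) = vsum u - vsum v.
Proof.
elim: u v => [|x u IHu] [|y v] // eq_uv; first by rewrite /vsum big_nil subr0.
by rewrite vsub_cons !vsum_cons IHu; [ring | case: eq_uv].
Qed.

Lemma vsum_nseq m c : vsum (nseq m c) = m%:R * c.
Proof. by rewrite /vsum big_nseq iter_addr addr0 mulr_natl. Qed.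

Lemma dot_nseqr u c : dot u (nseq (size u) c) = c * vsum u.
Proof.
elim: u => [|x u IHu]; first by rewrite dot_nill /vsum big_nil mulr0.
by rewrite [nseq _ _]/= dot_cons IHu vsum_cons; ring.
Qed.

Lemma dot_map_subr r w b : size r = size w ->
  dot r (map (fun x => x - b) w) = dot r w - b * vsum r.
Proof.
elim: r w => [|x r IHr] [|y w] // eq_rw; first by rewrite !dot_nill /vsum big_nil; ring.
by rewrite !dot_cons IHr ?vsum_cons; [ring | case: eq_rw].
Qed.

End Vectors.

Section PolarCone.
Variable R : realFieldType.
Implicit Types (c : R) (r u v w y : seq R).

Definition polar_up r := vsum r = 0 /\ forall k, vsum (drop k r) <= 0.

Lemma suffix_nonpos_dot_le0 r w : size r = size w -> sorted <=%R w ->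
  all (fun x => 0 <= x) w -> (forall k, vsum (drop k r) <= 0) -> dot r w <= 0.
Proof.
elim: r w => [|a r IHr] [|b w] //; rewrite ?dot_nill // => [[size_rw]] sorted_bw.
move=> /andP[b_ge0 w_ge0] suffix_le0.
rewrite dot_cons -[dot r w](subrK (b * vsum r)) -dot_map_subr //.
have shifted_le0 : dot r [seq x - b | x <- w] <= 0.
  apply: IHr; first by rewrite size_map.
  - by rewrite sorted_map; apply: sub_sorted (path_sorted sorted_bw) => x y /=; rewrite lerD2r.
  - have := order_path_min (@le_trans _ R) sorted_bw; rewrite all_map.
    by apply: sub_all => x /=; rewrite subr_ge0.
  - by move=> k; apply: (suffix_le0 k.+1).
have : a + vsum r <= 0 by rewrite -vsum_cons -[a :: r]drop0.
nra.
Qed.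

Lemma polar_up_dot_le0 r w : polar_up r -> size r = size w -> sorted <=%R w ->
  dot r w <= 0.
Proof.
case: w => [|b w] [sum0 suffix_le0] size_rw sorted_w; first by rewrite dot_nilr.
have -> : dot r (b :: w) = dot r [seq x - b | x <- b :: w].
  by rewrite dot_map_subr // sum0 mulr0 subr0.
apply: suffix_nonpos_dot_le0 => //; first by rewrite size_map.
- by rewrite sorted_map; apply: sub_sorted sorted_w => x y /=; rewrite lerD2r.
- rewrite /= subrr lexx /=; have := order_path_min (@le_trans _ R) sorted_w.
  by rewrite all_map; apply: sub_all => x /=; rewrite subr_ge0.
Qed.

Lemma polar_up_nil : polar_up [::].
Proof. by split=> [|k]; rewrite ?drop_nil /vsum big_nil. Qed.

Lemma polar_up_cat r1 r2 : polar_up r1 -> polar_up r2 -> polar_up (r1 ++ r2).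
Proof.
move=> [sum1 suffix1] [sum2 suffix2]; split; first by rewrite vsum_cat sum1 sum2 addr0.
move=> k; rewrite drop_cat; case: ifP => _; last exact: suffix2.
by rewrite vsum_cat sum2 addr0 suffix1.
Qed.

Lemma polar_up_vsub_nseq y c : vsum y = (size y)%:R * c ->
  (forall k, (k <= size y)%N -> k%:R * c <= vsum (take k y)) ->
  polar_up (vsub y (nseq (size y) c)).
Proof.
move=> sum_y prefix_ge; set r := vsub y _.
have sum_r : vsum r = 0 by rewrite vsum_vsub ?size_nseq // vsum_nseq sum_y subrr.
split=> // k; have := vsum_cat (take k r) (drop k r); rewrite cat_take_drop sum_r.
move=> /eqP; rewrite eq_sym addrC addr_eq0 => /eqP ->; rewrite oppr_le0.
have [le_ky | lt_yk] := leqP k (size y).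
  rewrite take_vsub take_nseq // vsum_vsub ?size_nseq ?size_takel //.
  by rewrite vsum_nseq subr_ge0 prefix_ge.
by rewrite take_oversize ?sum_r // size_vsub size_nseq minnn ltnW.
Qed.

End PolarCone.

Section Projection.
Variable R : realFieldType.
Implicit Types (u v w y p q : seq R) (K : seq R -> Prop).

Definition up_kkt y q :=
  [/\ size q = size y, sorted <=%R q, polar_up (vsub y q) & dot (vsub y q) q = 0].

Lemma up_kkt_isProj y q : up_kkt y q -> isProj (Sup (size y)) y q.
Proof.
case=> size_q sorted_q polar orth; split=> // v [size_v sorted_v].
have : dot (vsub y q) v <= 0.
  by apply: polar_up_dot_le0; rewrite // size_vsub size_q size_v minnn.
rewrite dot_vsubl // in orth; rewrite dot_vsubl //; have := sqnorm_ge0 (vsub q v).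
by rewrite !sqnorm_vsub ?size_q ?size_v //; lra.
Qed.

(* The easy half of |Pi(y)|^2 = max_{w in S^up} 2<y, w> - |w|^2. *)
Lemma polar_up_sqnorm_ge y q w : size q = size y -> polar_up (vsub y q) ->
  size w = size y -> sorted <=%R w -> 2 * dot y w - sqnorm w <= sqnorm q.
Proof.
move=> size_q polar size_w sorted_w.
have : dot (vsub y q) w <= 0.
  by apply: polar_up_dot_le0; rewrite // size_vsub size_q size_w minnn.
rewrite dot_vsubl // => le_yq; have := sqnorm_ge0 (vsub q w).
by rewrite sqnorm_vsub ?size_q ?size_w // !sqnorm_dot; lra.
Qed.

Definition vmid u v : seq R := [seq (a.1 + a.2) / 2 | a <- zip u v].

Lemma vmid_parallelogram y p q : size y = size p -> size p = size q ->
  4 * sqnorm (vsub y (vmid p q)) =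
  2 * sqnorm (vsub y p) + 2 * sqnorm (vsub y q) - sqnorm (vsub p q).
Proof.
elim: y p q => [|z y IHy] [|a p] [|b q] // size_yp size_pq.
  by rewrite /sqnorm !big_nil; ring.
rewrite /vmid /= !vsub_cons !sqnorm_cons mulrDr.
by rewrite [_ * sqnorm _]IHy; [field | case: size_yp | case: size_pq].
Qed.

Lemma isProj_uniq K y p q : (forall u v, K u -> K v -> K (vmid u v)) ->
  size p = size y -> size q = size y -> isProj K y p -> isProj K y q -> p = q.
Proof.
move=> K_vmid size_p size_q [Kp min_p] [Kq min_q].
have Kmid := K_vmid _ _ Kp Kq.
have := vmid_parallelogram (y := y) (esym size_p) (etrans size_p (esym size_q)).
have := min_p _ Kmid; have := min_q _ Kmid; have := min_p _ Kq; have := min_q _ Kp.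
move=> q_le_p p_le_q q_le_mid p_le_mid parallelogram.
apply: sqnorm_vsub_le0; first by rewrite size_p size_q.
lra.
Qed.

Lemma path_vmid a b u v : size u = size v ->
  path <=%R a u -> path <=%R b v -> path <=%R ((a + b) / 2) (vmid u v).
Proof.
elim: u v a b => [|x u IHu] [|y v] //= a b [size_uv].
move=> /andP[le_ax path_u] /andP[le_by path_v].
by rewrite IHu // andbT; lra.
Qed.

Lemma Sup_vmid m u v : Sup m u -> Sup m v -> Sup m (vmid u v).
Proof.
case=> size_u sorted_u [size_v sorted_v].
split; first by rewrite size_map size_zip size_u size_v minnn.
case: u v size_u size_v sorted_u sorted_v => [|a u] [|b v] //= <- [size_vu].
exact: path_vmid.
Qed.

Lemma proj_unique K y p : isProj K y p -> (forall q, isProj K y q -> q = p) -> proj K y = p.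
Proof. by move=> proj_p uniq_p; apply: uniq_p; apply: epsilon_spec; exists p. Qed.

Lemma isProj_Sup_kkt y p q : up_kkt y q -> isProj (Sup (size y)) y p -> p = q.
Proof.
move=> kkt proj_p; have [[size_p _] _] := proj_p; have [size_q _ _ _] := kkt.
by apply: (isProj_uniq _ size_p size_q proj_p (up_kkt_isProj kkt)) => u v; apply: Sup_vmid.
Qed.

Lemma proj_Sup_kkt y q : up_kkt y q -> proj (Sup (size y)) y = q.
Proof. by move=> kkt; apply: proj_unique (up_kkt_isProj kkt) _ => p; apply: isProj_Sup_kkt. Qed.

Lemma sorted_vopp v : sorted <=%R (vopp v) = sorted >=%R v.
Proof. by rewrite sorted_map; case: v => //= x v; apply: eq_path => a b /=; rewrite lerN2. Qed.

Lemma Sdown_vopp m v : Sdown m v <-> Sup m (vopp v).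
Proof. by rewrite /Sdown /Sup size_vopp sorted_vopp. Qed.

Lemma isProj_Sdown_vopp m x p : isProj (Sdown m) x p <-> isProj (Sup m) (vopp x) (vopp p).
Proof.
split=> [[/Sdown_vopp down_p min_p]|[/Sdown_vopp up_p min_p]]; split=> // v.
- rewrite -[v]voppK => /Sdown_vopp /min_p.
  by rewrite !vsub_vopp !sqnorm_vopp.
- by move=> /Sdown_vopp /min_p; rewrite !vsub_vopp !sqnorm_vopp.
Qed.

Lemma proj_Sdown_kkt x q : up_kkt (vopp x) q -> proj (Sdown (size x)) x = vopp q.
Proof.
move=> kkt; apply: proj_unique => [|p /isProj_Sdown_vopp proj_p].
  by apply/isProj_Sdown_vopp; rewrite voppK -(size_vopp x); apply: up_kkt_isProj.
by rewrite -(isProj_Sup_kkt (p := vopp p) kkt) ?voppK ?size_vopp.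
Qed.

End Projection.

Section IsotonicFit.
Variable R : realFieldType.
Implicit Types (y : seq R) (f : nat -> R).

Definition prefix_mean y l : R := vsum (take l y) / l%:R.

Fixpoint last_argmin f n : nat :=
  if n is p.+1 then
    if p is 0 then 1 else
    if f n <= f (last_argmin f p) then n else last_argmin f p
  else 0.

Lemma last_argminSS f p : last_argmin f p.+2 =
  if f p.+2 <= f (last_argmin f p.+1) then p.+2 else last_argmin f p.+1.
Proof. by []. Qed.

Lemma last_argmin_spec f n : (1 <= n)%N ->
  [/\ (1 <= last_argmin f n <= n)%N,
      forall k, (1 <= k <= n)%N -> f (last_argmin f n) <= f k
    & forall k, (last_argmin f n < k <= n)%N -> f (last_argmin f n) < f k].
Proof.
elim: n => [|[|p] IHn] // _.
  by split=> //= k k_range; [have -> : k = 1%N by lia | exfalso; lia].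
have [l_range l_min l_lt] := IHn isT; rewrite last_argminSS.
set l := last_argmin f p.+1 in l_range l_min l_lt *.
have [le_new | lt_old] := leP (f p.+2) (f l).
  split=> [|k k_range|k]; [lia | | lia].
  have [le_kp | gt_kp] := leqP k p.+1; last by have -> : k = p.+2 by lia.
  by apply: le_trans le_new (l_min k _); lia.
split=> [|k k_range|k k_range]; first lia.
- have [le_kp | gt_kp] := leqP k p.+1; first by apply: l_min; lia.
  have -> : k = p.+2 by lia.
  exact: ltW.
- have [le_kp | gt_kp] := leqP k p.+1; first by apply: l_lt; lia.
  by have -> : k = p.+2 by lia.
Qed.

Definition first_block y := last_argmin (prefix_mean y) (size y).

Fixpoint isoreg (fuel : nat) y : seq R :=
  if fuel is fuel'.+1 then
    if y is [::] then [::] else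
    nseq (first_block y) (prefix_mean y (first_block y)) ++
      isoreg fuel' (drop (first_block y) y)
  else [::].

Lemma isoregS fuel y : y != [::] -> isoreg fuel.+1 y =
  nseq (first_block y) (prefix_mean y (first_block y)) ++ isoreg fuel (drop (first_block y) y).
Proof. by case: y. Qed.

Lemma prefix_meanK y k : (0 < k)%N -> prefix_mean y k * k%:R = vsum (take k y).
Proof. by move=> k_gt0; rewrite /prefix_mean divfK // pnatr_eq0 -lt0n. Qed.

Lemma first_block_spec y : y != [::] -> let l := first_block y in
  [/\ (1 <= l <= size y)%N,
      forall k, (1 <= k <= size y)%N -> prefix_mean y l <= prefix_mean y k
    & forall k, (l < k <= size y)%N -> prefix_mean y l < prefix_mean y k].
Proof. by case: y => // x y _; apply: last_argmin_spec. Qed.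

Lemma polar_up_first_block y : y != [::] -> let l := first_block y in
  polar_up (vsub (take l y) (nseq l (prefix_mean y l))).
Proof.
move=> /first_block_spec [l_range l_min _] l.
have size_take : size (take l y) = l by rewrite size_takel; lia.
rewrite -[in nseq l _]size_take; apply: polar_up_vsub_nseq; rewrite size_take.
  by rewrite mulrC prefix_meanK //; lia.
move=> [|k] le_kl; first by rewrite mul0r take0 /vsum big_nil.
rewrite take_takel // -prefix_meanK // mulrC ler_pM2r ?ltr0Sn // l_min //; lia.
Qed.

Lemma prefix_mean_first_block_lt y : let l := first_block y in let y' := drop l y in
  y' != [::] -> prefix_mean y l < prefix_mean y' (first_block y').
Proof.
move=> l y' ne_y'; have ne_y : y != [::] by apply: contra_neq ne_y' => y_nil; rewrite /y' y_nil.
have [l_range _ l_lt] := first_block_spec ne_y; have [l2_range _ _] := first_block_spec ne_y'.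
set l2 := first_block y' in l2_range *; rewrite size_drop in l2_range.
set c := prefix_mean y l; set c2 := prefix_mean y' l2.
have sum_y : vsum (take l y) = c * l%:R by rewrite prefix_meanK //; lia.
have sum_y' : vsum (take l2 y') = c2 * l2%:R by rewrite prefix_meanK //; lia.
have : c * (l + l2)%:R < c * l%:R + c2 * l2%:R.
  rewrite -sum_y -sum_y' -vsum_cat -takeD -prefix_meanK; last lia.
  by rewrite ltr_pM2r ?l_lt ?ltr0n; lia.
have : 0 < l2%:R :> R by rewrite ltr0n; lia.
rewrite natrD; nra.
Qed.

Lemma isoreg_head_gt fuel y z t :
  isoreg fuel (drop (first_block y) y) = z :: t -> prefix_mean y (first_block y) < z.
Proof.
set y' := drop _ y => eq_zt.
have ne_y' : y' != [::] by apply/eqP => y'_nil; move: eq_zt; rewrite y'_nil; case: fuel.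
have [l2_range _ _] := first_block_spec ne_y'; have := prefix_mean_first_block_lt ne_y'.
case: fuel eq_zt => [//|fuel]; rewrite isoregS //.
by case: (first_block y') l2_range => // l2 _ /= [<- _].
Qed.

Lemma path_nseq_cat (c : R) l s : path <=%R c s -> path <=%R c (nseq l c ++ s).
Proof. by move=> path_s; elim: l => //= l ->; rewrite lexx. Qed.

Lemma up_kkt_isoreg fuel y : (size y <= fuel)%N -> up_kkt y (isoreg fuel y).
Proof.
have kkt_nil : up_kkt [::] [::] by split; rewrite ?dot_nill //; exact: polar_up_nil.
elim: fuel y => [|fuel IH] y le_fuel; first by case: y le_fuel.
have [-> // | ne_y] := eqVneq y [::]; have [l_range _ _] := first_block_spec ne_y.
rewrite isoregS //; set l := first_block y in l_range *; set c := prefix_mean y l.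
have polar_block : polar_up (vsub (take l y) (nseq l c)) := polar_up_first_block ne_y.
set y' := drop l y; set q' := isoreg fuel y'.
have [size_q' sorted_q' polar_q' orth_q'] : up_kkt y' q' by apply: IH; rewrite size_drop; lia.
have size_take : size (take l y) = l by rewrite size_takel; lia.
have split_res : vsub y (nseq l c ++ q') = vsub (take l y) (nseq l c) ++ vsub y' q'.
  by rewrite -vsub_cat ?cat_take_drop // size_nseq.
split.
- by rewrite size_cat size_nseq size_q' size_drop; lia.
- rewrite -(@prednK l) /=; last lia.
  apply: path_nseq_cat; case eq_q': q' sorted_q' => [//|z t] /= ->.
  by rewrite andbT ltW // (isoreg_head_gt eq_q').
- by rewrite split_res; apply: polar_up_cat.
- rewrite split_res dot_cat ?size_vsub ?size_nseq ?size_take ?minnn // orth_q' addr0.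
  have := dot_nseqr (vsub (take l y) (nseq l c)) c.
  rewrite size_vsub size_nseq size_take minnn => ->.
  by case: polar_block => -> _; rewrite mulr0.
Qed.

End IsotonicFit.

Section BlockBound.
Variable R : realFieldType.
Implicit Types (c : R) (u v s mu xi : seq R).

Lemma sqnorm_proj_Sdown_ge u v : Sdown (size u) v ->
  2 * dot u v - sqnorm v <= sqnorm (proj (Sdown (size u)) u).
Proof.
move=> /Sdown_vopp [size_v sorted_v]; have kkt := up_kkt_isoreg (leqnn (size (vopp u))).
rewrite (proj_Sdown_kkt kkt) sqnorm_vopp -(sqnorm_vopp v).
have -> : dot u v = dot (vopp u) (vopp v) by rewrite dot_voppl dot_voppr opprK.
case: kkt => size_q _ polar _; apply: (polar_up_sqnorm_ge size_q polar _ sorted_v).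
by rewrite size_v size_vopp.
Qed.

Lemma sqnorm_block_le mu xi c : size mu = size xi -> sorted <=%R mu ->
  polar_up (vsub (vadd mu xi) (nseq (size mu) c)) ->
  sqnorm (vsub (nseq (size mu) c) mu) <= sqnorm (proj (Sdown (size xi)) xi).
Proof.
move=> size_mu sorted_mu polar; set l := size mu in polar *; set C := nseq l c.
set d := vsub C mu; set y := vadd mu xi.
have size_C : size C = l by rewrite size_nseq.
have size_y : size y = l by rewrite size_vadd -size_mu minnn.
have down_d : Sdown (size xi) d.
  split; first by rewrite size_vsub size_C -size_mu minnn.
  have -> : d = [seq c - x | x <- mu].
    by rewrite /d /C /l; elim: (mu) => // x s IHs; rewrite [nseq _ _]/= vsub_cons IHs.
  by rewrite sorted_map; apply: sub_sorted sorted_mu => a b /= ?; lra.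
have := sqnorm_proj_Sdown_ge down_d.
have : dot (vsub y C) mu <= 0.
  by apply: polar_up_dot_le0; rewrite // size_vsub size_y size_C minnn.
have : dot (vsub y C) C = 0.
  have := dot_nseqr (vsub y C) c; rewrite size_vsub size_y size_C minnn => ->.
  by case: polar => -> _; rewrite mulr0.
rewrite !dot_vsubl ?size_y // !dot_vaddl // dot_vsubr ?size_C // sqnorm_vsub ?size_C //.
by rewrite (dotC mu C); lra.
Qed.

Lemma runs_aux_nseq c k m s : runs_aux c k (nseq m c ++ s) = runs_aux c (k + m) s.
Proof. by elim: m k => [|m IHm] k /=; rewrite ?addn0 // eqxx IHm addnS. Qed.

Lemma runs_nseq_cat c l s : (forall z t, s = z :: t -> z != c) ->
  runs (nseq l.+1 c ++ s) = l.+1 :: runs s.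
Proof.
move=> head_neq; rewrite /= runs_aux_nseq add1n.
by case: s head_neq => // z t /(_ z t erefl) /negPf /= ->.
Qed.

Lemma sqnorm_isoreg_sub_le fuel mu xi :
  size mu = size xi -> (size xi <= fuel)%N -> sorted <=%R mu ->
  sqnorm (vsub (isoreg fuel (vadd mu xi)) mu) <=
    \sum_(b <- reshape (runs (isoreg fuel (vadd mu xi))) xi) sqnorm (proj (Sdown (size b)) b).
Proof.
elim: fuel mu xi => [|fuel IH] mu xi size_mu le_fuel sorted_mu.
  by case: mu xi size_mu le_fuel sorted_mu => [|? ?] [|? ?] // *; rewrite /sqnorm /= !big_nil.
set y := vadd mu xi; have size_y : size y = size xi by rewrite size_vadd size_mu minnn.
have [y_nil | ne_y] := eqVneq y [::].
  by rewrite y_nil; case: (mu) => [|? ?]; rewrite /= /sqnorm !big_nil.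
have [l_range _ _] := first_block_spec ne_y.
rewrite isoregS //; set l := first_block y in l_range *; set c := prefix_mean y l.
have polar_block : polar_up (vsub (take l y) (nseq l c)) := polar_up_first_block ne_y.
set q' := isoreg fuel (drop l y).
have runs_q : runs (nseq l c ++ q') = l :: runs q'.
  have l_gt0 : (0 < l)%N by lia.
  by rewrite -(prednK l_gt0) runs_nseq_cat // => z t /isoreg_head_gt /gt_eqF ->.
have size_take_mu : size (take l mu) = l by rewrite size_takel // size_mu -size_y; lia.
have size_take_xi : size (take l xi) = l by rewrite size_takel // -size_y; lia.
rewrite runs_q /= big_cons -[X in vsub _ X](cat_take_drop l) vsub_cat ?size_nseq //.
rewrite sqnorm_cat; apply: lerD.
  have := @sqnorm_block_le (take l mu) (take l xi) c.
  rewrite size_take_mu size_take_xi -take_vadd; apply=> //.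
  exact: take_sorted.
rewrite /q' drop_vadd; apply: IH; rewrite ?size_drop ?drop_sorted ?size_mu //; lia.
Qed.

End BlockBound.

Theorem mainTheorem6 (R : realFieldType) (n : nat) (mu xi : seq R) :
  (1 <= n)%N -> Sup n mu -> size xi = n ->
  let y := vadd mu xi in
  let muhat := proj (Sup n) y in
  sqnorm (vsub muhat mu) <=
    \sum_(b <- reshape (runs muhat) xi) sqnorm (proj (Sdown (size b)) b).
Proof.
move=> _ [size_mu sorted_mu] size_xi /=; set y := vadd mu xi.
have size_y : size y = n by rewrite size_vadd size_mu size_xi minnn.
rewrite -size_y (proj_Sup_kkt (up_kkt_isoreg (leqnn (size y)))) size_y.
by apply: sqnorm_isoreg_sub_le; rewrite ?size_mu ?size_xi.
Qed.
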